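(* Assume that $\kappa_{\mathcal H}(X_i,X_i)<\infty$ almost surely for every $i$; that for every $y\in\mathcal Y$ the map $u\mapsto\ell(y,u)$ is convex and three times differentiable, $u\mapsto\partial_2\ell(y,u)$ is $\beta_{\ell;2}$-Lipschitz continuous, and $\sup_u|\partial_2^3\ell(y,u)|\le\xi_\ell$; and that $u\mapsto s(y,u)$ is $\gamma$-Lipschitz continuous for every $y$. Then for every $y\in\mathcal Y$, $$|S_{\lambda;D^y}(X_i,Y_i)-\tilde S^{\mathrm{IF}}_{\lambda;D^y}(X_i,Y_i)|\le\tau^{(2)}_{\lambda;i}(y)\ (1\le i\le n),\qquad|S_{\lambda;D^y}(X_{n+1},y)-\tilde S^{\mathrm{IF}}_{\lambda;D^y}(X_{n+1},y)|\le\tau^{(2)}_{\lambda;n+1}(y),$$ where $\tau^{(2)}_{\lambda;i}(y)=\sqrt{K_{i,i}}\sqrt{K_{n+1,n+1}}\min\Big(\frac{\gamma\rho^{(2)}_\lambda(y)}{\lambda^3(n+1)^2},\frac{2\gamma\rho^{(1)}_\lambda(y)}{\lambda(n+1)}\Big)$.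
   Context: Let $\mathcal X\subset\mathbb R^d$, $\mathcal Y\subset\mathbb R$, $D=\{(X_1,Y_1),\dots,(X_n,Y_n)\}$ i.i.d., $(X_{n+1},Y_{n+1})$ independent with the same law; $D^{y'}=D\cup\{(X_{n+1},y')\}$. $\mathcal H$ is an RKHS with kernel $\kappa_{\mathcal H}$, $K_x=\kappa_{\mathcal H}(x,\cdot)$, $K=(\kappa_{\mathcal H}(X_i,X_j))_{1\le i,j\le n+1}$, $\mathcal A=\mathrm{span}\{K_{X_1},\dots,K_{X_{n+1}}\}$. For a loss $\ell$ and $\lambda>0$, $\hat f_{\lambda;D^{y'}}$ minimizes $\frac1{n+1}\sum_{(x,y'')\in D^{y'}}\ell(y'',f(x))+\lambda\|f\|_{\mathcal H}^2$. Fix $z\in\mathcal Y$. Let $H(f)=\frac1{n+1}\sum_{i=1}^n\partial_2^2\ell(Y_i,f(X_i))K_{X_i}\otimes K_{X_i}+\frac1{n+1}\partial_2^2\ell(z,f(X_{n+1}))K_{X_{n+1}}\otimes K_{X_{n+1}}+2\lambda\mathrm{Id}$ with $(g\otimes g)h=\langle g,h\rangle_{\mathcal H}g$ and $H(f)^+$ the inverse of its restriction to $\mathcal A$; $\mathbf I_{\hat f}(X_{n+1},z')=-\frac1{n+1}\partial_2\ell(z',\hat f_{\lambda;D^z}(X_{n+1}))H(\hat f_{\lambda;D^z})^+K_{X_{n+1}}$ and $\tilde f^{\mathrm{IF}}_{\lambda;D^y}=\hat f_{\lambda;D^z}-\mathbf I_{\hat f}(X_{n+1},z)+\mathbf I_{\hat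 f}(X_{n+1},y)$. For $s:\mathcal Y\times\mathcal Y\to\mathbb R_+$: $S_{\lambda;D^y}(X_i,Y_i)=s(Y_i,\hat f_{\lambda;D^y}(X_i))$, $S_{\lambda;D^y}(X_{n+1},y)=s(y,\hat f_{\lambda;D^y}(X_{n+1}))$, $\tilde S^{\mathrm{IF}}_{\lambda;D^y}(X_i,Y_i)=s(Y_i,\tilde f^{\mathrm{IF}}_{\lambda;D^y}(X_i))$ ($i\le n$), $\tilde S^{\mathrm{IF}}_{\lambda;D^y}(X_{n+1},y)=s(y,\tilde f^{\mathrm{IF}}_{\lambda;D^y}(X_{n+1}))$. Further $\rho^{(1)}_\lambda(y)=\frac12|\partial_2\ell(y,\hat f_{\lambda;D^z}(X_{n+1}))-\partial_2\ell(z,\hat f_{\lambda;D^z}(X_{n+1}))|$, $\tilde\rho^{(1)}_\lambda(y)=(1+K_{n+1,n+1}\frac{\beta_{\ell;2}}{\lambda(n+1)})\rho^{(1)}_\lambda(y)$ and $\rho^{(2)}_\lambda(y)=\frac{\xi_\ell}2\sqrt{K_{n+1,n+1}}(\frac1{n+1}\sum_{i=1}^{n+1}K_{i,i}^{3/2})(\tilde\rho^{(1)}_\lambda(y))^2+2\lambda K_{n+1,n+1}\beta_{\ell;2}\tilde\rho^{(1)}_\lambda(y)$. *)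

From HB Require Import structures.
From mathcomp Require Import all_boot all_order all_algebra.
From mathcomp Require Import all_classical all_reals all_analysis.
Set Implicit Arguments. Unset Strict Implicit. Unset Printing Implicit Defensive.
Import Order.TTheory GRing.Theory Num.Theory.
Local Open Scope ring_scope.

Section Defs.
Variable R : realType.

Definition inner_product (V : lmodType R) (ip : V -> V -> R) : Prop :=
  [/\ forall u v, ip u v = ip v u,
      forall (a : R) u v w, ip (a *: u + v) w = a * ip u w + ip v w,
      forall v, 0 <= ip v v &
      forall v, ip v v = 0 -> v = 0].

(* The RKHS H is modelled as the inner-product space (V, ip) with feature map
   Kf : T -> V (Kf x = K_x); an element f is the function x |-> <f, K_x>
   (reproducing property).  kappa(x, x') = <K_x, K_x'>. *)
Definition ev (V : lmodType R) (ip : V -> V -> R) (T : Type) (Kf : T -> V)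
  (f : V) (x : T) : R := ip f (Kf x).

(* Gram matrix K = (kappa(X_i, X_j))_{i,j <= n+1} (0-based: index ord_max is n+1). *)
Definition kmat (V : lmodType R) (ip : V -> V -> R) (T : Type) (Kf : T -> V)
  n (Xs : 'I_n.+1 -> T) (i j : 'I_n.+1) : R := ip (Kf (Xs i)) (Kf (Xs j)).

(* Labels of D^{y'}: Y_1..Y_n followed by y' at the last position. *)
Definition lab n (Ys : 'I_n -> R) (y : R) (i : 'I_n.+1) : R :=
  match unlift ord_max i with Some j => Ys j | None => y end.

Definition reg_risk (V : lmodType R) (ip : V -> V -> R) (T : Type) (Kf : T -> V)
  (l : R -> R -> R) (lam : R) n (Xs : 'I_n.+1 -> T) (Ys : 'I_n -> R) (y : R)
  (f : V) : R :=
  (n.+1%:R)^-1 * \sum_(i < n.+1) l (lab Ys y i) (ev ip Kf f (Xs i))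
  + lam * ip f f.

Definition is_minimizer (V : Type) (J : V -> R) (f : V) : Prop :=
  forall g, J f <= J g.

Definition hess (V : lmodType R) (ip : V -> V -> R) (T : Type) (Kf : T -> V)
  (l : R -> R -> R) (lam : R) n (Xs : 'I_n.+1 -> T) (Ys : 'I_n -> R) (z : R)
  (f h : V) : V :=
  (n.+1%:R)^-1 *: \sum_(i < n.+1)
     ((derive1n 2 (l (lab Ys z i)) (ev ip Kf f (Xs i)) * ip (Kf (Xs i)) h)
        *: Kf (Xs i))
  + (2 * lam) *: h.

Definition spanA (V : lmodType R) (T : Type) (Kf : T -> V) n
  (Xs : 'I_n.+1 -> T) (h : V) : Prop :=
  exists c : 'I_n.+1 -> R, h = \sum_(i < n.+1) c i *: Kf (Xs i).

(* g = H(f)^+ v : g lies in A and H(f) g = v (unique since H(f) >= 2 lam Id). *)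
Definition is_Hplus_app (V : lmodType R) (ip : V -> V -> R) (T : Type)
  (Kf : T -> V) (l : R -> R -> R) (lam : R) n (Xs : 'I_n.+1 -> T)
  (Ys : 'I_n -> R) (z : R) (f v g : V) : Prop :=
  spanA Kf Xs g /\ hess ip Kf l lam Xs Ys z f g = v.

(* Influence function I_{\hat f}(X_{n+1}, z') with g = H(\hat f_z)^+ K_{X_{n+1}}. *)
Definition infl (V : lmodType R) (ip : V -> V -> R) (T : Type) (Kf : T -> V)
  (l : R -> R -> R) n (Xs : 'I_n.+1 -> T) (fz g : V) (z' : R) : V :=
  (- ((n.+1%:R)^-1 * derive1 (l z') (ev ip Kf fz (Xs ord_max)))) *: g.

Definition f_IF (V : lmodType R) (ip : V -> V -> R) (T : Type) (Kf : T -> V)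
  (l : R -> R -> R) n (Xs : 'I_n.+1 -> T) (fz g : V) (z y : R) : V :=
  fz - infl ip Kf l Xs fz g z + infl ip Kf l Xs fz g y.

Definition rho1 (V : lmodType R) (ip : V -> V -> R) (T : Type) (Kf : T -> V)
  (l : R -> R -> R) n (Xs : 'I_n.+1 -> T) (fz : V) (z y : R) : R :=
  2^-1 * `|derive1 (l y) (ev ip Kf fz (Xs ord_max))
           - derive1 (l z) (ev ip Kf fz (Xs ord_max))|.

Definition rho1t (V : lmodType R) (ip : V -> V -> R) (T : Type) (Kf : T -> V)
  (l : R -> R -> R) (lam beta : R) n (Xs : 'I_n.+1 -> T) (fz : V) (z y : R) : R :=
  (1 + kmat ip Kf Xs ord_max ord_max * (beta / (lam * n.+1%:R)))
  * rho1 ip Kf l Xs fz z y.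

Definition rho2 (V : lmodType R) (ip : V -> V -> R) (T : Type) (Kf : T -> V)
  (l : R -> R -> R) (lam beta xi : R) n (Xs : 'I_n.+1 -> T) (fz : V) (z y : R)
  : R :=
  xi / 2 * Num.sqrt (kmat ip Kf Xs ord_max ord_max)
    * ((n.+1%:R)^-1 * \sum_(i < n.+1) Num.sqrt (kmat ip Kf Xs i i) ^+ 3)
    * (rho1t ip Kf l lam beta Xs fz z y) ^+ 2
  + 2 * lam * kmat ip Kf Xs ord_max ord_max * beta
    * rho1t ip Kf l lam beta Xs fz z y.

Definition tau2 (V : lmodType R) (ip : V -> V -> R) (T : Type) (Kf : T -> V)
  (l : R -> R -> R) (lam beta xi gamma : R) n (Xs : 'I_n.+1 -> T) (fz : V)
  (z y : R) (i : 'I_n.+1) : R :=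
  Num.sqrt (kmat ip Kf Xs i i) * Num.sqrt (kmat ip Kf Xs ord_max ord_max)
  * Num.min (gamma * rho2 ip Kf l lam beta xi Xs fz z y
                / (lam ^+ 3 * n.+1%:R ^+ 2))
            (2 * gamma * rho1 ip Kf l Xs fz z y / (lam * n.+1%:R)).

Definition convex_fun (g : R -> R) : Prop :=
  forall u v (t : R), 0 <= t <= 1 ->
    g (t * u + (1 - t) * v) <= t * g u + (1 - t) * g v.

Definition lipschitz_with (c : R) (g : R -> R) : Prop :=
  forall u v, `|g u - g v| <= c * `|u - v|.

End Defs.

(* Both minimizers satisfy the representer equation
   [w sum_j l'_j(f(X_j)) K_j + 2 lam f = 0], and the equations for the labels
   [z] and [y] differ only at [X_{n+1}], by [w gap K_{n+1}]. Convexity makes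
   [f |-> w sum_j l'_j(f(X_j)) K_j] monotone, and any equation [v + 2 lam u = r]
   with [<v, u> >= 0] yields [|u| <= |r| / (2 lam)]. This bounds [fy - fz] and
   [g = H^+ K_{n+1}], hence the error [err = fy - f^IF] to first order in [gap].
   For the second-order bound, [err] solves [H(fz) err = w sum_j res_j K_j], where
   [res_j] is the Taylor remainder of [l'] between [fz(X_j)] and [fy(X_j)], of
   size [xi |fy - fz|^2 |K_j|^2], except at [X_{n+1}] where the labels differ and
   only [|res| <= 2 beta |K_{n+1}| |fy - fz|] holds. The score error is at most
   [gamma |<err, K_{X_i}>| <= gamma |err| sqrt(K_ii)]. *)

From HB Require Import structures.
From mathcomp Require Import all_boot all_order all_algebra.
From mathcomp Require Import all_classical all_reals all_analysis.
From mathcomp Require Import ring lra.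
Set Implicit Arguments. Unset Strict Implicit. Unset Printing Implicit Defensive.
Import Order.TTheory GRing.Theory Num.Theory.
Local Open Scope ring_scope.

Section RealFunctions.
Variable R : realType.
Implicit Types (F G : R -> R) (b C : R).

Lemma lipschitz_with_ge0 C G : lipschitz_with C G -> 0 <= C.
Proof.
move=> lipG; have := lipG 1 0; rewrite subr0 normr1 mulr1.
exact/le_trans/normr_ge0.
Qed.

Lemma le_of_forall_small_slack (x y C t0 : R) : 0 < t0 -> 0 <= C ->
  (forall t, 0 < t -> t <= t0 -> x <= y + C * t) -> x <= y.
Proof.
move=> t0_gt0 C_ge0 slack; apply/ler_addgt0Pr => e e_gt0.
have C1_gt0 : 0 < C + 1 by lra.
set t := Num.min t0 (e / (C + 1)).
have t_gt0 : 0 < t by rewrite lt_min t0_gt0 divr_gt0.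
apply: (le_trans (slack t t_gt0 _)); first by rewrite ge_min lexx.
rewrite lerD2l.
have Ct : C * t <= (C + 1) * (e / (C + 1)).
  by apply: ler_pM; rewrite ?(ltW t_gt0) ?ge_min ?lexx ?orbT //; lra.
by rewrite mulrCA divff ?mulr1 ?gt_eqF in Ct.
Qed.

Lemma derivable_MVT F u v : (forall x, derivable F x 1) ->
  exists2 c, `|c - u| <= `|v - u| & F v - F u = derive1 F c * (v - u).
Proof.
move=> dF.
have mvt a b : a <= b ->
    exists2 c, c \in `[a, b]%R & F b - F a = derive1 F c * (b - a).
  move=> ab; apply: MVT_segment => //.
    by move=> x _; rewrite derive1E; apply: derivableP.
  by apply: derivable_within_continuous => x _; exact: dF.
case: (leP u v) => [uv|vu].
  have [c] := mvt u v uv; rewrite in_itv /= => /andP[uc cv] ->.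
  by exists c; rewrite // !ger0_norm ?subr_ge0 ?lerD2r // (le_trans uc).
have [c] := mvt v u (ltW vu); rewrite in_itv /= => /andP[vc cu] e.
exists c; last by rewrite -opprB e -mulrN opprB.
rewrite (ler0_norm (x := v - u)); last by rewrite subr_le0 ltW.
by rewrite ler_norml; apply/andP; split; lra.
Qed.

Lemma taylor1_lipschitz F b : (forall x, derivable F x 1) ->
  lipschitz_with b (derive1 F) -> forall u v,
  `|F v - F u - derive1 F u * (v - u)| <= b * (v - u) ^+ 2.
Proof.
move=> dF lipF' u v; have b_ge0 := lipschitz_with_ge0 lipF'.
have [c cu ->] := derivable_MVT u v dF.
rewrite -mulrBl normrM (le_trans (ler_wpM2r (normr_ge0 _) (lipF' c u))) //.
by rewrite -real_normK ?num_real // expr2 mulrA ler_wpM2r // ler_wpM2l.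
Qed.

Lemma lipschitz_with_derive1_bounded G C : (forall x, derivable G x 1) ->
  (forall x, `|derive1 G x| <= C) -> lipschitz_with C G.
Proof.
move=> dG G'_le u v; have [c _ ->] := derivable_MVT v u dG.
by rewrite normrM ler_wpM2r.
Qed.

Lemma norm_derive1_le_lipschitz G b C : (forall x, derivable G x 1) ->
  lipschitz_with C (derive1 G) -> lipschitz_with b G ->
  forall x, `|derive1 G x| <= b.
Proof.
move=> dG lipG' lipG x; apply: (le_of_forall_small_slack (C := C) ltr01).
  exact: lipschitz_with_ge0 lipG'.
move=> t t_gt0 _.
have := taylor1_lipschitz dG lipG' x (x + t); have := lipG (x + t) x.
have -> : x + t - x = t by ring.
rewrite (gtr0_norm t_gt0) => incr taylor.
have : `|derive1 G x * t| <= b * t + C * t ^+ 2.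
  have -> : derive1 G x * t =
      (G (x + t) - G x) - (G (x + t) - G x - derive1 G x * t) by ring.
  exact: le_trans (ler_normB _ _) (lerD incr taylor).
by rewrite normrM (gtr0_norm t_gt0) expr2 mulrA -mulrDl ler_pM2r.
Qed.

Lemma derive1_ge0_nondecreasing G C : (forall x, derivable G x 1) ->
  lipschitz_with C (derive1 G) -> {homo G : u v / u <= v} ->
  forall x, 0 <= derive1 G x.
Proof.
move=> dG lipG' incrG x; rewrite -oppr_le0.
apply: (le_of_forall_small_slack (C := C) ltr01).
  exact: lipschitz_with_ge0 lipG'.
move=> t t_gt0 _.
have := taylor1_lipschitz dG lipG' x (x + t).
have -> : x + t - x = t by ring.
rewrite ler_norml => /andP[_ taylor].
have incr : G x <= G (x + t) by apply: incrG; lra.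
have : - derive1 G x * t <= (0 + C * t) * t by rewrite add0r -mulrA -expr2; lra.
by rewrite ler_pM2r.
Qed.

Lemma convex_tangent_le F b : convex_fun F -> (forall x, derivable F x 1) ->
  lipschitz_with b (derive1 F) -> forall u v,
  F u + derive1 F u * (v - u) <= F v.
Proof.
move=> cvxF dF lipF' u v.
suff : derive1 F u * (v - u) <= F v - F u by lra.
apply: (le_of_forall_small_slack (C := b * (v - u) ^+ 2) ltr01).
  by rewrite mulr_ge0 ?sqr_ge0 // (lipschitz_with_ge0 lipF').
move=> t t_gt0 t_le1.
have chord : F (t * v + (1 - t) * u) <= t * F v + (1 - t) * F u.
  by apply: cvxF; rewrite (ltW t_gt0) t_le1.
have := taylor1_lipschitz dF lipF' u (t * v + (1 - t) * u).
have -> : t * v + (1 - t) * u - u = t * (v - u) by ring.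
rewrite ler_norml exprMn => /andP[taylor _].
have : derive1 F u * (v - u) * t <= (F v - F u + b * (v - u) ^+ 2 * t) * t
  by lra.
by rewrite ler_pM2r.
Qed.

Lemma convex_derive1_monotone F b : convex_fun F -> (forall x, derivable F x 1) ->
  lipschitz_with b (derive1 F) -> forall u v,
  0 <= (derive1 F v - derive1 F u) * (v - u).
Proof.
move=> cvxF dF lipF' u v.
have := convex_tangent_le cvxF dF lipF' u v.
have := convex_tangent_le cvxF dF lipF' v u.
rewrite mulrBl; lra.
Qed.

End RealFunctions.

Record smooth_convex_loss (R : realType) (beta xi : R) (L : R -> R) : Prop := {
  loss_convex : convex_fun L;
  loss_derivable : forall u, derivable L u 1;
  loss_derivable1 : forall u, derivable (derive1 L) u 1;
  loss_derivable2 : forall u, derivable (derive1n 2 L) u 1;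
  loss_lipschitz1 : lipschitz_with beta (derive1 L);
  loss_bounded3 : forall u, `|derive1n 3 L u| <= xi }.

Section SmoothConvexLoss.
Variables (R : realType) (beta xi : R) (L : R -> R).
Hypothesis hL : smooth_convex_loss beta xi L.

Lemma loss_beta_ge0 : 0 <= beta.
Proof. exact: lipschitz_with_ge0 (loss_lipschitz1 hL). Qed.

Lemma loss_xi_ge0 : 0 <= xi.
Proof. exact: le_trans (normr_ge0 _) (loss_bounded3 hL 0). Qed.

Lemma loss_lipschitz2 : lipschitz_with xi (derive1n 2 L).
Proof.
exact: lipschitz_with_derive1_bounded (loss_derivable2 hL) (loss_bounded3 hL).
Qed.

Lemma loss_taylor1 u v :
  `|L v - L u - derive1 L u * (v - u)| <= beta * (v - u) ^+ 2.
Proof. exact: taylor1_lipschitz (loss_derivable hL) (loss_lipschitz1 hL) u v. Qed.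

Lemma loss_taylor2 u v :
  `|derive1 L v - derive1 L u - derive1n 2 L u * (v - u)| <= xi * (v - u) ^+ 2.
Proof.
exact: (taylor1_lipschitz (F := derive1 L) (loss_derivable1 hL) loss_lipschitz2 u v).
Qed.

Lemma loss_derive1_monotone u v : 0 <= (derive1 L v - derive1 L u) * (v - u).
Proof.
exact: convex_derive1_monotone (loss_convex hL) (loss_derivable hL)
  (loss_lipschitz1 hL) u v.
Qed.

Lemma loss_derive1_nondecreasing : {homo derive1 L : u v / u <= v}.
Proof.
move=> u v; rewrite le_eqVlt => /predU1P[-> //|uv].
by have := loss_derive1_monotone u v; rewrite pmulr_lge0 ?subr_gt0 // subr_ge0.
Qed.

Lemma loss_derive2_ge0 u : 0 <= derive1n 2 L u.
Proof.
exact: derive1_ge0_nondecreasing (loss_derivable1 hL) loss_lipschitz2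
  loss_derive1_nondecreasing u.
Qed.

Lemma loss_norm_derive2_le u : `|derive1n 2 L u| <= beta.
Proof.
exact: norm_derive1_le_lipschitz (loss_derivable1 hL) loss_lipschitz2
  (loss_lipschitz1 hL) u.
Qed.

End SmoothConvexLoss.

Section InnerProduct.
Variables (R : realType) (V : lmodType R) (ip : V -> V -> R).
Hypothesis hip : inner_product ip.

Lemma ipC u v : ip u v = ip v u.
Proof. by case: hip. Qed.

Lemma ip_ge0 v : 0 <= ip v v.
Proof. by case: hip. Qed.

Lemma ip_eq0 v : ip v v = 0 -> v = 0.
Proof. by case: hip => _ _ _; apply. Qed.

Lemma ipDZl a u v w : ip (a *: u + v) w = a * ip u w + ip v w.
Proof. by case: hip. Qed.

Lemma ip0l w : ip 0 w = 0.
Proof.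
have := ipDZl 1 0 0 w; rewrite scale1r addr0 mul1r => e.
by apply: (addrI (ip 0 w)); rewrite addr0 -e.
Qed.

Lemma ipDl u v w : ip (u + v) w = ip u w + ip v w.
Proof. by rewrite -[u]scale1r ipDZl mul1r scale1r. Qed.

Lemma ipZl a u w : ip (a *: u) w = a * ip u w.
Proof. by rewrite -[a *: u]addr0 ipDZl ip0l addr0. Qed.

Lemma ipNl u w : ip (- u) w = - ip u w.
Proof. by rewrite -scaleN1r ipZl mulN1r. Qed.

Lemma ipBl u v w : ip (u - v) w = ip u w - ip v w.
Proof. by rewrite ipDl ipNl. Qed.

Lemma ipDr u v w : ip w (u + v) = ip w u + ip w v.
Proof. by rewrite ipC ipDl !(ipC w). Qed.

Lemma ipZr a u w : ip w (a *: u) = a * ip w u.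
Proof. by rewrite ipC ipZl ipC. Qed.

Lemma ipBr u v w : ip w (u - v) = ip w u - ip w v.
Proof. by rewrite ipC ipBl !(ipC w). Qed.

Lemma ip0r w : ip w 0 = 0.
Proof. by rewrite ipC ip0l. Qed.

Lemma ip_suml m (F : 'I_m -> V) w :
  ip (\sum_(j < m) F j) w = \sum_(j < m) ip (F j) w.
Proof. exact: (big_morph (ip^~ w) (fun u v => ipDl u v w) (ip0l w)). Qed.

Lemma ip_ext u u' : (forall v, ip u v = ip u' v) -> u = u'.
Proof.
move=> uu'; apply/eqP; rewrite -subr_eq0; apply/eqP/ip_eq0.
by rewrite ipBl uu' subrr.
Qed.

Definition nrm v := Num.sqrt (ip v v).

Lemma nrm_ge0 v : 0 <= nrm v.
Proof. exact: sqrtr_ge0. Qed.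

Lemma nrm_sq v : nrm v ^+ 2 = ip v v.
Proof. by rewrite sqr_sqrtr // ip_ge0. Qed.

Lemma norm_ip_le u v : `|ip u v| <= nrm u * nrm v.
Proof.
rewrite /nrm -sqrtrM ?ip_ge0 // -sqrtr_sqr ler_sqrt ?mulr_ge0 ?ip_ge0 //.
have [v0|v_neq0] := eqVneq (ip v v) 0.
  by rewrite (ip_eq0 v0) !ip0r expr0n mulr0.
have v_gt0 : 0 < ip v v by rewrite lt_def v_neq0 ip_ge0.
set t := ip u v / ip v v.
have := ip_ge0 (u - t *: v); rewrite !ipBl !ipBr !ipZl !ipZr (ipC v u).
have -> : ip u u - t * ip u v - (t * ip u v - t * (t * ip v v)) =
    (ip u u * ip v v - ip u v ^+ 2) / ip v v.
  by rewrite /t; field; rewrite v_neq0.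
by rewrite pmulr_lge0 ?invr_gt0 // subr_ge0.
Qed.

Lemma sqr_ip_le u v : ip u v ^+ 2 <= (nrm u * nrm v) ^+ 2.
Proof.
rewrite -real_normK ?num_real // lerXn2r ?nnegrE ?mulr_ge0 ?nrm_ge0 //.
exact: norm_ip_le.
Qed.

Lemma ler_nrmD u v : nrm (u + v) <= nrm u + nrm v.
Proof.
rewrite -[nrm u + nrm v]ger0_norm ?addr_ge0 ?nrm_ge0 // -sqrtr_sqr /nrm.
rewrite ler_sqrt ?sqr_ge0 // sqrrD -!/(nrm _) !nrm_sq !ipDl !ipDr (ipC v u).
have := norm_ip_le u v; rewrite ler_norml => /andP[_ uv_le]; lra.
Qed.

Lemma nrmZ a v : nrm (a *: v) = `|a| * nrm v.
Proof.
by rewrite /nrm ipZl ipZr mulrA -expr2 sqrtrM ?sqr_ge0 // sqrtr_sqr.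
Qed.

Lemma ler_nrm_sum m (F : 'I_m -> V) :
  nrm (\sum_(j < m) F j) <= \sum_(j < m) nrm (F j).
Proof.
elim/big_rec2: _ => [|j u x _ le_ux]; first by rewrite /nrm ip0l sqrtr0.
by apply: le_trans (ler_nrmD _ _) _; rewrite lerD2l.
Qed.

Lemma nrm_le_coercive (mu : R) u v : 0 < mu -> 0 <= ip v u ->
  nrm u <= nrm (v + mu *: u) / mu.
Proof.
move=> mu_gt0 vu_ge0; rewrite ler_pdivlMr //.
have [->|u_neq0] := eqVneq u 0; first by rewrite /nrm ip0l sqrtr0 mul0r.
have nu_gt0 : 0 < nrm u.
  rewrite lt_def nrm_ge0 andbT; apply: contra u_neq0 => /eqP nu0.
  by apply/eqP/ip_eq0; rewrite -nrm_sq nu0 expr0n.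
rewrite -(ler_pM2r nu_gt0).
apply: le_trans (le_trans (ler_norm _) (norm_ip_le (v + mu *: u) u)).
rewrite ipDl ipZl -nrm_sq.
have -> : nrm u * mu * nrm u = mu * nrm u ^+ 2 by ring.
by rewrite lerDr.
Qed.

End InnerProduct.

Section LinearCombination.
Variables (R : realType) (V : lmodType R) (m : nat) (k : 'I_m -> V).

Definition lin_comb (c : 'I_m -> R) : V := \sum_(j < m) c j *: k j.

Lemma eq_lin_comb c1 c2 : c1 =1 c2 -> lin_comb c1 = lin_comb c2.
Proof. by move=> c12; apply: eq_bigr => j _; rewrite c12. Qed.

Lemma lin_combP a c1 c2 :
  lin_comb (fun j => a * c1 j + c2 j) = a *: lin_comb c1 + lin_comb c2.
Proof.
rewrite /lin_comb scaler_sumr -big_split; apply: eq_bigr => j _.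
by rewrite scalerDl scalerA.
Qed.

Lemma lin_combB c1 c2 :
  lin_comb (fun j => c1 j - c2 j) = lin_comb c1 - lin_comb c2.
Proof. by rewrite /lin_comb -sumrB; apply: eq_bigr => j _; rewrite scalerBl. Qed.

Variable ip : V -> V -> R.
Hypothesis hip : inner_product ip.

Lemma ip_lin_combl c v : ip (lin_comb c) v = \sum_(j < m) c j * ip (k j) v.
Proof. by rewrite (ip_suml hip); apply: eq_bigr => j _; rewrite (ipZl hip). Qed.

Lemma nrm_lin_comb_le c : nrm ip (lin_comb c) <= \sum_(j < m) `|c j| * nrm ip (k j).
Proof.
apply: le_trans (ler_nrm_sum hip _) _.
by apply: ler_sum => j _; rewrite nrmZ.
Qed.

Lemma nrm_le_lin_comb_coercive (w mu : R) c u : 0 <= w -> 0 < mu ->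
  (forall j, 0 <= c j * ip (k j) u) ->
  nrm ip u <= nrm ip (w *: lin_comb c + mu *: u) / mu.
Proof.
move=> w_ge0 mu_gt0 c_ge0; apply: nrm_le_coercive => //.
by rewrite (ipZl hip) ip_lin_combl mulr_ge0 // sumr_ge0.
Qed.

End LinearCombination.

Section Labels.
Variables (R : realType) (n : nat) (Ys : 'I_n -> R).

Lemma lab_max y : lab Ys y ord_max = y.
Proof. by rewrite /lab unlift_none. Qed.

Lemma lab_lift y z j : j != ord_max -> lab Ys y j = lab Ys z j.
Proof. by rewrite /lab; case: unliftP => [j' _|->]; rewrite ?eqxx. Qed.

Lemma lab_in (Y : set R) y : (forall i, Y (Ys i)) -> Y y ->
  forall j, Y (lab Ys y j).
Proof. by move=> YYs Yy j; rewrite /lab; case: unliftP. Qed.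

Lemma sum_lab (M : zmodType) (F : 'I_n.+1 -> R -> M) y z :
  \sum_(j < n.+1) F j (lab Ys y j) =
  \sum_(j < n.+1) F j (lab Ys z j) + (F ord_max y - F ord_max z).
Proof.
rewrite (bigD1 ord_max) // [in RHS](bigD1 ord_max) //= !lab_max.
rewrite (eq_bigr (fun j => F j (lab Ys z j))); last by move=> j /(lab_lift y z) ->.
by rewrite [in RHS]addrAC [F _ z + _]addrC subrK.
Qed.

End Labels.

Lemma eq0_of_forall_quadratic_ge0 (R : realFieldType) (x C : R) : 0 <= C ->
  (forall t, 0 <= t * x + t ^+ 2 * C) -> x = 0.
Proof.
move=> C_ge0 quad_ge0; have C1_gt0 : 0 < C + 1 by lra.
have := quad_ge0 (- x / (C + 1)).
have -> : - x / (C + 1) * x + (- x / (C + 1)) ^+ 2 * C =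
    - (x ^+ 2 / (C + 1) ^+ 2) by field; rewrite gt_eqF.
rewrite oppr_ge0 pmulr_lle0 ?invr_gt0 ?exprn_gt0 // => x2_le0.
by apply/eqP; rewrite -sqrf_eq0 eq_le x2_le0 sqr_ge0.
Qed.

Section FirstOrderCondition.
Variables (R : realType) (V : lmodType R) (ip : V -> V -> R).
Hypothesis hip : inner_product ip.

Lemma minimizer_first_order m (k : 'I_m -> V) (Ls : 'I_m -> R -> R)
    (w lam beta : R) f : 0 <= w -> 0 <= lam -> 0 <= beta ->
  (forall j u v, `|Ls j v - Ls j u - derive1 (Ls j) u * (v - u)|
                   <= beta * (v - u) ^+ 2) ->
  is_minimizer (fun h => w * \sum_(j < m) Ls j (ip h (k j)) + lam * ip h h) f ->
  w *: lin_comb k (fun j => derive1 (Ls j) (ip f (k j))) + (2 * lam) *: f = 0.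
Proof.
move=> w_ge0 lam_ge0 beta_ge0 taylor fmin.
set G := (X in X = 0).
suff G_orth h : ip G h = 0 by exact: ip_eq0 hip G (G_orth G).
have -> : ip G h = w * \sum_(j < m) derive1 (Ls j) (ip f (k j)) * ip h (k j)
    + 2 * lam * ip f h.
  rewrite (ipDl hip) !(ipZl hip) (ip_lin_combl _ hip); congr (_ * _ + _).
  by apply: eq_bigr => j _; rewrite (ipC hip (k j)).
set C := w * \sum_(j < m) beta * ip h (k j) ^+ 2 + lam * ip h h.
apply: (eq0_of_forall_quadratic_ge0 (C := C)) => [|t].
  by rewrite addr_ge0 ?mulr_ge0 ?ip_ge0 ?sumr_ge0 // => j _; rewrite mulr_ge0 ?sqr_ge0.
have := fmin (f + t *: h).
rewrite /= !(ipDl hip) !(ipDr hip) !(ipZl hip) !(ipZr hip) (ipC hip h f).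
have sum_le : \sum_(j < m) Ls j (ip (f + t *: h) (k j))
    <= \sum_(j < m) Ls j (ip f (k j))
     + t * \sum_(j < m) derive1 (Ls j) (ip f (k j)) * ip h (k j)
     + t ^+ 2 * \sum_(j < m) beta * ip h (k j) ^+ 2.
  rewrite !mulr_sumr -!big_split /=; apply: ler_sum => j _.
  rewrite (ipDl hip) (ipZl hip).
  have := taylor j (ip f (k j)) (ip f (k j) + t * ip h (k j)).
  have -> : ip f (k j) + t * ip h (k j) - ip f (k j) = t * ip h (k j) by ring.
  rewrite ler_norml => /andP[_]; lra.
have := ler_wpM2l w_ge0 sum_le; rewrite /C; lra.
Qed.

End FirstOrderCondition.

Section InfluenceFunctionError.
Variables (R : realType) (T : Type) (V : lmodType R) (ip : V -> V -> R).
Variables (Kf : T -> V) (n : nat) (Xs : 'I_n.+1 -> T) (Ys : 'I_n -> R).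
Variables (l : R -> R -> R) (lam beta xi z y : R) (fz fy g : V).
Hypothesis hip : inner_product ip.
Hypothesis lam_gt0 : 0 < lam.
Hypothesis loss_z : forall j, smooth_convex_loss beta xi (l (lab Ys z j)).
Hypothesis loss_y : forall j, smooth_convex_loss beta xi (l (lab Ys y j)).
Hypothesis fz_min : is_minimizer (reg_risk ip Kf l lam Xs Ys z) fz.
Hypothesis fy_min : is_minimizer (reg_risk ip Kf l lam Xs Ys y) fy.
Hypothesis g_eq : hess ip Kf l lam Xs Ys z fz g = Kf (Xs ord_max).

Local Notation N := (n.+1%:R : R).
Local Notation kX := (fun j => Kf (Xs j)).
Local Notation m := (@ord_max n).

Let w : R := N^-1.
Let gap := derive1 (l y) (ip fz (Kf (Xs m))) - derive1 (l z) (ip fz (Kf (Xs m))).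
Let dlt j := derive1 (l (lab Ys y j)) (ip fy (Kf (Xs j)))
           - derive1 (l (lab Ys y j)) (ip fz (Kf (Xs j))).
Let curv j := derive1n 2 (l (lab Ys z j)) (ip fz (Kf (Xs j))).
Let res j := curv j * ip (Kf (Xs j)) (fy - fz) - dlt j.
Let err := fy - f_IF ip Kf l Xs fz g z y.

Let g_lin_eq : w *: lin_comb kX (fun j => curv j * ip (Kf (Xs j)) g)
  + (2 * lam) *: g = Kf (Xs m).
Proof. exact: g_eq. Qed.

Let curv_sq_ge0 u j : 0 <= curv j * ip (Kf (Xs j)) u * ip (Kf (Xs j)) u.
Proof. by rewrite -mulrA mulr_ge0 ?(loss_derive2_ge0 (loss_z j)) // -expr2 sqr_ge0. Qed.

Let ip_diff j : ip (Kf (Xs j)) (fy - fz) = ip fy (Kf (Xs j)) - ip fz (Kf (Xs j)).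
Proof. by rewrite (ipBr hip) !(ipC hip (Kf (Xs j))). Qed.

Let w_gt0 : 0 < w. Proof. by rewrite invr_gt0. Qed.
Let w_ge0 : 0 <= w. Proof. exact: ltW. Qed.
Let two_lam_gt0 : 0 < 2 * lam. Proof. by rewrite mulr_gt0. Qed.
Let beta_ge0 : 0 <= beta. Proof. exact: loss_beta_ge0 (loss_z m). Qed.
Let xi_ge0 : 0 <= xi. Proof. exact: loss_xi_ge0 (loss_z m). Qed.

Lemma reg_risk_first_order y' f :
  (forall j, smooth_convex_loss beta xi (l (lab Ys y' j))) ->
  is_minimizer (reg_risk ip Kf l lam Xs Ys y') f ->
  w *: lin_comb kX (fun j => derive1 (l (lab Ys y' j)) (ip f (Kf (Xs j))))
  + (2 * lam) *: f = 0.
Proof.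
move=> loss_y' f_min.
apply: (minimizer_first_order hip (Ls := fun j => l (lab Ys y' j)) (k := kX)
  (beta := beta)) => //; first exact: ltW.
by move=> j; exact: loss_taylor1.
Qed.

Lemma f_IF_eq : f_IF ip Kf l Xs fz g z y = fz - (w * gap) *: g.
Proof.
rewrite /f_IF /infl -addrA !scaleNr opprK -scalerBl; congr (_ + _).
by rewrite -[RHS]scaleNr /w /gap /ev; congr (_ *: _); ring.
Qed.

Lemma diff_eq : w *: lin_comb kX dlt + (2 * lam) *: (fy - fz)
  = (- (w * gap)) *: Kf (Xs m).
Proof.
have split_dlt : lin_comb kX dlt =
    lin_comb kX (fun j => derive1 (l (lab Ys y j)) (ip fy (Kf (Xs j))))
    - (lin_comb kX (fun j => derive1 (l (lab Ys z j)) (ip fz (Kf (Xs j))))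
       + gap *: Kf (Xs m)).
  rewrite lin_combB; congr (_ - _).
  by rewrite /lin_comb (sum_lab Ys (fun j c =>
    derive1 (l c) (ip fz (Kf (Xs j))) *: Kf (Xs j)) y z) -scalerBl.
rewrite split_dlt; apply: (ip_ext hip) => v.
have := congr1 (ip^~ v) (reg_risk_first_order loss_z fz_min).
have := congr1 (ip^~ v) (reg_risk_first_order loss_y fy_min).
rewrite /= !(ipDl hip, ipNl hip, ipZl hip, ip0l hip); lra.
Qed.

Lemma nrm_diff_le : nrm ip (fy - fz) <= w * `|gap| * nrm ip (Kf (Xs m)) / (2 * lam).
Proof.
have dlt_mono j : 0 <= dlt j * ip (Kf (Xs j)) (fy - fz).
  by rewrite /dlt ip_diff; exact: loss_derive1_monotone (loss_y j) _ _.
apply: le_trans (nrm_le_lin_comb_coercive hip w_ge0 two_lam_gt0 dlt_mono) _.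
by rewrite diff_eq nrmZ // normrN normrM ger0_norm.
Qed.

Lemma nrm_g_le : nrm ip g <= nrm ip (Kf (Xs m)) / (2 * lam).
Proof.
apply: le_trans (nrm_le_lin_comb_coercive hip w_ge0 two_lam_gt0 (curv_sq_ge0 g)) _.
by rewrite g_lin_eq.
Qed.

Lemma err_eq : err = (fy - fz) + (w * gap) *: g.
Proof. by rewrite /err f_IF_eq opprB addrA addrAC. Qed.

Lemma residual_eq : w *: lin_comb kX (fun j => curv j * ip (Kf (Xs j)) err)
  + (2 * lam) *: err = w *: lin_comb kX res.
Proof.
have split_err : lin_comb kX (fun j => curv j * ip (Kf (Xs j)) err) =
    (w * gap) *: lin_comb kX (fun j => curv j * ip (Kf (Xs j)) g)
    + lin_comb kX (fun j => curv j * ip (Kf (Xs j)) (fy - fz)).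
  rewrite -lin_combP; apply: eq_lin_comb => j.
  by rewrite err_eq (ipDr hip) (ipZr hip); ring.
have split_res : lin_comb kX res =
    lin_comb kX (fun j => curv j * ip (Kf (Xs j)) (fy - fz)) - lin_comb kX dlt.
  exact: lin_combB.
rewrite split_err split_res err_eq; apply: (ip_ext hip) => v.
have := congr1 (ip^~ v) g_lin_eq; have := congr1 (ip^~ v) diff_eq.
rewrite /= !(ipDl hip, ipNl hip, ipZl hip) => diff_v /(congr1 ( *%R (w * gap))).
lra.
Qed.

Lemma res_le_lift j : j != m ->
  `|res j| <= xi * (nrm ip (Kf (Xs j)) * nrm ip (fy - fz)) ^+ 2.
Proof.
move=> j_neq_m; rewrite /res /dlt (lab_lift Ys y z j_neq_m) -normrN opprB.
apply: le_trans (ler_wpM2l xi_ge0 (sqr_ip_le hip _ _)); rewrite ip_diff.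
exact: loss_taylor2 (loss_z j) _ _.
Qed.

Lemma res_le_max : `|res m| <= 2 * beta * (nrm ip (Kf (Xs m)) * nrm ip (fy - fz)).
Proof.
have ip_le := norm_ip_le hip (Kf (Xs m)) (fy - fz).
have curv_le := loss_norm_derive2_le (loss_z m) (ip fz (Kf (Xs m))).
have dlt_le := loss_lipschitz1 (loss_y m) (ip fy (Kf (Xs m))) (ip fz (Kf (Xs m))).
rewrite -ip_diff in dlt_le.
have := ler_wpM2r (normr_ge0 (ip (Kf (Xs m)) (fy - fz))) curv_le.
have := ler_wpM2l beta_ge0 ip_le.
rewrite /res; have := ler_normB (curv m * ip (Kf (Xs m)) (fy - fz)) (dlt m).
rewrite normrM /dlt; lra.
Qed.

Lemma sum_res_le : \sum_(j < n.+1) `|res j| * nrm ip (Kf (Xs j)) <=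
  xi * nrm ip (fy - fz) ^+ 2 * \sum_(j < n.+1) nrm ip (Kf (Xs j)) ^+ 3
  + 2 * beta * nrm ip (fy - fz) * nrm ip (Kf (Xs m)) ^+ 2.
Proof.
rewrite (bigD1 m) //= mulr_sumr [X in _ <= X + _](bigD1 m) //=.
have lift_le : \sum_(j < n.+1 | j != m) `|res j| * nrm ip (Kf (Xs j))
    <= \sum_(j < n.+1 | j != m)
         xi * nrm ip (fy - fz) ^+ 2 * nrm ip (Kf (Xs j)) ^+ 3.
  apply: ler_sum => j j_neq_m.
  apply: le_trans (ler_wpM2r (nrm_ge0 ip _) (res_le_lift j_neq_m)) _.
  by rewrite le_eqVlt; apply/orP; left; apply/eqP; ring.
have max_le := ler_wpM2r (nrm_ge0 ip (Kf (Xs m))) res_le_max.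
have : 0 <= xi * nrm ip (fy - fz) ^+ 2 * nrm ip (Kf (Xs m)) ^+ 3.
  by rewrite !mulr_ge0 ?exprn_ge0 ?nrm_ge0.
lra.
Qed.

Lemma nrm_err_le_lin : nrm ip err <= w * `|gap| * nrm ip (Kf (Xs m)) / lam.
Proof.
rewrite err_eq; apply: le_trans (ler_nrmD hip _ _) _.
rewrite nrmZ // normrM (ger0_norm w_ge0).
have := ler_wpM2l (mulr_ge0 w_ge0 (normr_ge0 gap)) nrm_g_le.
have -> : w * `|gap| * nrm ip (Kf (Xs m)) / lam =
    w * `|gap| * nrm ip (Kf (Xs m)) / (2 * lam)
    + w * `|gap| * (nrm ip (Kf (Xs m)) / (2 * lam)).
  by field; rewrite gt_eqF.
by move=> g_le; apply: lerD; [exact: nrm_diff_le|exact: g_le].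
Qed.

Lemma nrm_err_le_quad : nrm ip err <=
  w * (xi * nrm ip (fy - fz) ^+ 2 * \sum_(j < n.+1) nrm ip (Kf (Xs j)) ^+ 3
       + 2 * beta * nrm ip (fy - fz) * nrm ip (Kf (Xs m)) ^+ 2) / (2 * lam).
Proof.
apply: le_trans (nrm_le_lin_comb_coercive hip w_ge0 two_lam_gt0 (curv_sq_ge0 err)) _.
rewrite residual_eq nrmZ // (ger0_norm w_ge0) ler_pM2r ?invr_gt0 //.
rewrite ler_pM2l //; exact: le_trans (nrm_lin_comb_le _ hip _) sum_res_le.
Qed.

Lemma nrm_err_le_rho1 : nrm ip err <=
  nrm ip (Kf (Xs m)) * (2 * rho1 ip Kf l Xs fz z y / (lam * N)).
Proof.
apply: le_trans nrm_err_le_lin _; rewrite le_eqVlt; apply/orP; left; apply/eqP.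
by rewrite /rho1 /ev /gap /w; field; rewrite nat1r !gt_eqF.
Qed.

Lemma nrm_err_le_rho2 : nrm ip err <=
  nrm ip (Kf (Xs m)) * (rho2 ip Kf l lam beta xi Xs fz z y / (lam ^+ 3 * N ^+ 2)).
Proof.
set nk := nrm ip (Kf (Xs m)); set nd := nrm ip (fy - fz).
set P := \sum_(j < n.+1) nrm ip (Kf (Xs j)) ^+ 3.
set rt := rho1t ip Kf l lam beta Xs fz z y.
have K_eq : kmat ip Kf Xs m m = nk ^+ 2 by rewrite /nk nrm_sq.
have rho1_le : 2^-1 * `|gap| <= rt.
  rewrite /rt /rho1t mulrDl mul1r lerDl K_eq; apply: mulr_ge0; last first.
    by rewrite mulr_ge0 ?normr_ge0.
  by rewrite mulr_ge0 ?sqr_ge0 // divr_ge0 // ltW // mulr_gt0.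
have nd_le : nd <= w * rt * nk / lam.
  apply: le_trans nrm_diff_le _.
  have -> : w * `|gap| * nk / (2 * lam) = w * (2^-1 * `|gap|) * nk / lam.
    by field; rewrite gt_eqF.
  rewrite ler_pM2r ?invr_gt0 //.
  by apply: ler_wpM2r; [exact: nrm_ge0|exact: ler_wpM2l].
set D := w * rt * nk / lam.
have P_ge0 : 0 <= P by rewrite sumr_ge0 // => j _; rewrite exprn_ge0 ?nrm_ge0.
have nd_ge0 : 0 <= nd by exact: nrm_ge0.
have D_ge0 : 0 <= D := le_trans nd_ge0 nd_le.
apply: le_trans nrm_err_le_quad _; rewrite -/nk -/nd -/P.
have mono : w * (xi * nd ^+ 2 * P + 2 * beta * nd * nk ^+ 2) / (2 * lam)
    <= w * (xi * D ^+ 2 * P + 2 * beta * D * nk ^+ 2) / (2 * lam).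
  rewrite ler_pM2r ?invr_gt0 // ler_pM2l // lerD //.
    by apply: ler_wpM2r => //; apply: ler_wpM2l => //; rewrite lerXn2r.
  apply: ler_wpM2r; first by rewrite exprn_ge0 ?nrm_ge0.
  by apply: ler_wpM2l; rewrite ?mulr_ge0.
apply: le_trans mono _.
have -> : rho2 ip Kf l lam beta xi Xs fz z y =
    xi / 2 * nk * (w * P) * rt ^+ 2 + 2 * lam * nk ^+ 2 * beta * rt.
  by rewrite -K_eq.
have -> : nk * ((xi / 2 * nk * (w * P) * rt ^+ 2 + 2 * lam * nk ^+ 2 * beta * rt)
    / (lam ^+ 3 * N ^+ 2)) = w * (xi * D ^+ 2 * P + 2 * beta * D * nk ^+ 2)
    / (2 * lam) + w ^+ 2 * beta * rt * nk ^+ 3 / lam ^+ 2.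
  by rewrite /D /w; field; rewrite nat1r !gt_eqF.
have rt_ge0 : 0 <= rt by apply: le_trans rho1_le; rewrite mulr_ge0 ?invr_ge0.
rewrite lerDl; apply: divr_ge0; last by rewrite exprn_ge0 ?ltW.
by rewrite mulr_ge0 ?exprn_ge0 ?nrm_ge0 // mulr_ge0 // mulr_ge0 ?exprn_ge0.
Qed.

End InfluenceFunctionError.

Theorem theorem21 (R : realType) (T : Type) (V : lmodType R)
  (ip : V -> V -> R) (Kf : T -> V) (n : nat) (Xs : 'I_n.+1 -> T)
  (Ys : 'I_n -> R) (Y : set R) (l s : R -> R -> R)
  (lam beta xi gamma z : R) :
  inner_product ip ->
  0 < lam ->
  (forall i, Y (Ys i)) ->
  Y z ->
  (forall y, Y y -> convex_fun (l y)) ->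
  (forall y, Y y -> forall u,
     [/\ derivable (l y) u 1, derivable (derive1 (l y)) u 1
       & derivable (derive1n 2 (l y)) u 1]) ->
  (forall y, Y y -> lipschitz_with beta (derive1 (l y))) ->
  (forall y, Y y -> forall u, `|derive1n 3 (l y) u| <= xi) ->
  (forall a b, 0 <= s a b) ->
  (forall y, Y y -> lipschitz_with gamma (s y)) ->
  forall fz g : V,
  is_minimizer (reg_risk ip Kf l lam Xs Ys z) fz ->
  is_Hplus_app ip Kf l lam Xs Ys z fz (Kf (Xs ord_max)) g ->
  forall y, Y y ->
  forall fy : V,
  is_minimizer (reg_risk ip Kf l lam Xs Ys y) fy ->
  forall i : 'I_n.+1,
    `|s (lab Ys y i) (ev ip Kf fy (Xs i))
      - s (lab Ys y i) (ev ip Kf (f_IF ip Kf l Xs fz g z y) (Xs i))|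
    <= tau2 ip Kf l lam beta xi gamma Xs fz z y i.
Proof.
move=> hip lam_gt0 YYs Yz cvx der lip bnd3 _ lip_s fz g fz_min [_ g_eq] y Yy fy
  fy_min i.
have loss y' : Y y' -> forall j, smooth_convex_loss beta xi (l (lab Ys y' j)).
  move=> Yy' j; have Yl := lab_in YYs Yy' j.
  split; [exact: cvx| | | |exact: lip|exact: bnd3];
    by move=> u; case: (der _ Yl u).
have gamma_ge0 : 0 <= gamma := lipschitz_with_ge0 (lip_s z Yz).
set err := fy - f_IF ip Kf l Xs fz g z y.
have err_le r : nrm ip err <= nrm ip (Kf (Xs ord_max)) * r ->
    gamma * (nrm ip err * nrm ip (Kf (Xs i)))
    <= nrm ip (Kf (Xs i)) * nrm ip (Kf (Xs ord_max)) * (gamma * r).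
  move=> err_r; have -> : nrm ip (Kf (Xs i)) * nrm ip (Kf (Xs ord_max)) * (gamma * r)
      = gamma * (nrm ip (Kf (Xs ord_max)) * r * nrm ip (Kf (Xs i))) by ring.
  by apply: ler_wpM2l => //; apply: ler_wpM2r => //; exact: nrm_ge0.
apply: le_trans (lip_s _ (lab_in YYs Yy i) _ _) _.
rewrite /ev -(ipBl hip) -/err.
apply: le_trans (ler_wpM2l gamma_ge0 (norm_ip_le hip _ _)) _.
rewrite /tau2 minr_pMr ?mulr_ge0 ?nrm_ge0 // le_min; apply/andP; split.
- rewrite -[gamma * _ / _]mulrA; apply: err_le.
  exact: nrm_err_le_rho2 hip lam_gt0 (loss z Yz) (loss y Yy) fz_min fy_min g_eq.
- have -> : forall a b, 2 * gamma * a / b = gamma * (2 * a / b) by move=> a b; ring.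
  apply: err_le.
  exact: nrm_err_le_rho1 hip lam_gt0 (loss z Yz) (loss y Yy) fz_min fy_min g_eq.
Qed.
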